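(* Let $\varepsilon>0$, $\theta_0>0$, $\Delta t>0$, $N\in\mathbb{N}$, $h=L/N$, and assume the mobility is constant, $\mathcal{M}\equiv1$. Consider the scheme: given $\phi^n\in\mathcal{C}_{\rm per}$, find $\phi^{n+1},\mu^{n+1}\in\mathcal{C}_{\rm per}$ with $$\frac{\phi^{n+1}-\phi^n}{\Delta t}=\Delta_h\mu^{n+1},\qquad \mu^{n+1}=\ln(1+\phi^{n+1})-\ln(1-\phi^{n+1})-\theta_0\phi^n-\varepsilon^2\Delta_h\phi^{n+1}.$$ Given $\phi^n\in\mathcal{C}_{\rm per}$ with $\|\phi^n\|_\infty\le M$ for some $M>0$ and $|\overline{\phi^n}|<1$, there exists a unique solution $\phi^{n+1}\in\mathcal{C}_{\rm per}$ of this scheme with $\phi^{n+1}-\overline{\phi^n}\in\mathring{\mathcal{C}}_{\rm per}$ and $\|\phi^{n+1}\|_\infty<1$.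
   Context: $\Omega=(0,L)^3$, periodic. Grid points $p_i=(i-\tfrac12)h$, $h=L/N$. $\mathcal{C}_{\rm per}$ is the space of real $N$-periodic grid functions $\nu_{i,j,k}$ on cell centers $(p_i,p_j,p_k)$. Inner product $\langle\nu,\xi\rangle=h^3\sum_{i,j,k=1}^N\nu_{i,j,k}\xi_{i,j,k}$; mean $\overline{\nu}=|\Omega|^{-1}\langle\nu,1\rangle$; $\mathring{\mathcal{C}}_{\rm per}=\{\nu\in\mathcal{C}_{\rm per}:\overline{\nu}=0\}$. $\Delta_h\nu_{i,j,k}=h^{-2}(\nu_{i+1,j,k}+\nu_{i-1,j,k}+\nu_{i,j+1,k}+\nu_{i,j-1,k}+\nu_{i,j,k+1}+\nu_{i,j,k-1}-6\nu_{i,j,k})$. $\|\nu\|_\infty=\max_{i,j,k}|\nu_{i,j,k}|$. Logarithms are applied pointwise. *)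

From HB Require Import structures.
From mathcomp Require Import all_boot all_order all_algebra.
From mathcomp Require Import reals exp.
Set Implicit Arguments. Unset Strict Implicit. Unset Printing Implicit Defensive.
Import Order.TTheory GRing.Theory Num.Theory.
Local Open Scope ring_scope.

(* C_per : real N-periodic grid functions on cell centres, indexed by ('I_N)^3;
   periodicity is encoded by cyclic neighbours ordS / ord_pred on 'I_N. *)
Definition grid (R : realType) (N : nat) := 'I_N -> 'I_N -> 'I_N -> R.

Definition ip (R : realType) (N : nat) (h : R) (u v : grid R N) : R :=
  h ^+ 3 * \sum_(i < N) \sum_(j < N) \sum_(k < N) u i j k * v i j k.

(* mean  |Omega|^{-1} <u,1>, with |Omega| = L^3, h = L/N *)
Definition gmean (R : realType) (N : nat) (L : R) (u : grid R N) : R :=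
  (L ^+ 3)^-1 * ip (L / N%:R) u (fun _ _ _ => 1).

Definition lap_h (R : realType) (N : nat) (h : R) (u : grid R N) : grid R N :=
  fun i j k => h ^- 2 *
    (u (ordS i) j k + u (ord_pred i) j k + u i (ordS j) k + u i (ord_pred j) k
     + u i j (ordS k) + u i j (ord_pred k) - 6%:R * u i j k).

Definition norm_inf (R : realType) (N : nat) (u : grid R N) : R :=
  \big[Num.max/0]_(i < N) \big[Num.max/0]_(j < N) \big[Num.max/0]_(k < N) `|u i j k|.

Definition scheme (R : realType) (N : nat) (L eps theta0 dt : R)
    (phi0 phi1 mu : grid R N) : Prop :=
  (forall i j k, (phi1 i j k - phi0 i j k) / dt = lap_h (L / N%:R) mu i j k) /\
  (forall i j k, mu i j k = ln (1 + phi1 i j k) - ln (1 - phi1 i j k)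
      - theta0 * phi0 i j k - eps ^+ 2 * lap_h (L / N%:R) phi1 i j k).

Definition admissible (R : realType) (N : nat) (L eps theta0 dt : R)
    (phi0 phi1 : grid R N) : Prop :=
  (exists mu, scheme L eps theta0 dt phi0 phi1 mu) /\
  gmean L (fun i j k => phi1 i j k - gmean L phi0) = 0 /\
  norm_inf phi1 < 1.

(* The solution is the minimiser of the discrete energy
     J(u) = sum G(u) + 1/(2 dt) ||u - phi^n||_{-1}^2 - theta0 <phi^n, u> + eps^2/2 ||grad_h u||^2,
   G(x) = (1+x) ln(1+x) + (1-x) ln(1-x), over the grid functions with values in [-1,1] and the
   mass of phi^n.  The H^{-1} norm is realised through a right inverse of Delta_h on mean-zero
   functions, which exists because the kernel of Delta_h consists of the constants.  The
   constraint set is compact, so a minimiser exists.  Moving mass between two cells a and b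
   reduces J to a function of one variable.  As G' = ln(1+x) - ln(1-x) blows up at +-1, and
   |mean phi^n| < 1 always leaves a cell strictly inside, no value of the minimiser sits at +-1;
   at interior values the derivative of that function vanishes, so G'(phi) plus the gradient of
   the quadratic part is constant, and applying Delta_h gives the scheme.  Two solutions coincide
   because testing the difference of their equations against phi2 - phi1 gives a sum of
   nonnegative terms (G' is increasing) equal to
   -dt ||grad_h (mu2 - mu1)||^2 - eps^2 ||grad_h (phi2 - phi1)||^2 <= 0. *)

From HB Require Import structures.
From mathcomp Require Import all_boot all_order all_algebra.
From mathcomp Require Import boolp classical_sets reals topology normedtype.
From mathcomp Require Import sequences matrix_normedtype derive exp.
From mathcomp Require Import ring lra zify.
Set Implicit Arguments. Unset Strict Implicit. Unset Printing Implicit Defensive.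
Import Order.TTheory GRing.Theory Num.Theory.
Import numFieldNormedType.Exports.
Local Open Scope ring_scope.

Section SummationByParts.
Variables (R : realType) (T : finType) (S P : T -> T).
Hypothesis SK : cancel S P.

Lemma sum_mul_diff2 (u v : T -> R) :
  \sum_x v x * (u (S x) + u (P x) - 2 * u x) =
  - \sum_x (v (S x) - v x) * (u (S x) - u x).
Proof.
have shift (f : T -> R) : \sum_x f (S x) = \sum_x f x.
  by rewrite [RHS](reindex_inj (can_inj SK)).
apply/eqP; rewrite -subr_eq0 opprK -big_split /=.
rewrite (eq_bigr (fun x => (v x * u (P x) - v (S x) * u x) +
    (v (S x) * u (S x) - v x * u x))); last by move=> x _; ring.
rewrite big_split !sumrB /= (shift (fun x => v x * u x)) subrr addr0.
rewrite -(shift (fun x => v x * u (P x))) /=.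
by under eq_bigr do rewrite SK; rewrite subrr.
Qed.

End SummationByParts.

Section FiniteSums.
Variables (R : comRingType) (T : finType).

Lemma sum_supp2 (F : T -> R) a b : a != b -> (forall x, x != a -> x != b -> F x = 0) ->
  \sum_x F x = F a + F b.
Proof.
move=> ab F0; rewrite (bigD1 a) //= (bigD1 b) 1?eq_sym //= big1 ?addr0 // => x /andP[].
exact: F0.
Qed.

Definition transfer (a b : T) : T -> R := fun x => (x == a)%:R - (x == b)%:R.

Lemma sum_transfer a b : \sum_x transfer a b x = 0.
Proof.
have one c : \sum_x ((x == c)%:R : R) = 1.
  by rewrite (bigD1 c) //= eqxx big1 ?addr0 // => x /negbTE ->.
by rewrite sumrB !one subrr.
Qed.

Lemma sum_quadratic_expand (L : (T -> R) -> T -> R) (f d : T -> R) t :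
  (forall x, L (fun y => f y + t * d y) x = L f x + t * L d x) ->
  \sum_x f x * L d x = \sum_x d x * L f x ->
  \sum_x (f x + t * d x) * L (fun y => f y + t * d y) x =
  \sum_x f x * L f x + 2 * t * \sum_x d x * L f x + t ^+ 2 * \sum_x d x * L d x.
Proof.
move=> Llin Lsym; under eq_bigr do rewrite Llin.
have -> : \sum_x (f x + t * d x) * (L f x + t * L d x) = \sum_x f x * L f x
    + t * \sum_x f x * L d x + t * \sum_x d x * L f x + t ^+ 2 * \sum_x d x * L d x.
  by rewrite !mulr_sumr -!big_split; apply: eq_bigr => x _ /=; ring.
by rewrite Lsym; ring.
Qed.

End FiniteSums.

Arguments transfer {R T}.

Section PeriodicGrid.
Variables (R : realType) (n : nat).
Local Notation N := n.+1.

Definition cell := ('I_N * 'I_N * 'I_N)%type.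

Definition shift1 (x : cell) : cell := (ordS x.1.1, x.1.2, x.2).
Definition unshift1 (x : cell) : cell := (ord_pred x.1.1, x.1.2, x.2).
Definition shift2 (x : cell) : cell := (x.1.1, ordS x.1.2, x.2).
Definition unshift2 (x : cell) : cell := (x.1.1, ord_pred x.1.2, x.2).
Definition shift3 (x : cell) : cell := (x.1.1, x.1.2, ordS x.2).
Definition unshift3 (x : cell) : cell := (x.1.1, x.1.2, ord_pred x.2).

Lemma shift1K : cancel shift1 unshift1.
Proof. by case=> [[i j] k]; rewrite /shift1 /unshift1 /= ordSK. Qed.
Lemma shift2K : cancel shift2 unshift2.
Proof. by case=> [[i j] k]; rewrite /shift2 /unshift2 /= ordSK. Qed.
Lemma shift3K : cancel shift3 unshift3.
Proof. by case=> [[i j] k]; rewrite /shift3 /unshift3 /= ordSK. Qed.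

Definition lap (h : R) (u : cell -> R) (x : cell) : R :=
  h ^- 2 * ((u (shift1 x) + u (unshift1 x) - 2 * u x)
          + (u (shift2 x) + u (unshift2 x) - 2 * u x)
          + (u (shift3 x) + u (unshift3 x) - 2 * u x)).

Lemma lap_lin h (u v : cell -> R) c x :
  lap h (fun y => u y + c * v y) x = lap h u x + c * lap h v x.
Proof. by rewrite /lap; ring. Qed.

Lemma lapB h (u v : cell -> R) x : lap h (fun y => u y - v y) x = lap h u x - lap h v x.
Proof. by rewrite /lap; ring. Qed.

Lemma lap_cst h c x : lap h (fun=> c) x = 0.
Proof. by rewrite /lap; ring. Qed.

Definition dirichlet (u v : cell -> R) : R :=
  \sum_x ((u (shift1 x) - u x) * (v (shift1 x) - v x)
        + (u (shift2 x) - u x) * (v (shift2 x) - v x)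
        + (u (shift3 x) - u x) * (v (shift3 x) - v x)).

Lemma dirichletC (u v : cell -> R) : dirichlet u v = dirichlet v u.
Proof. by apply: eq_bigr => x _; ring. Qed.

Lemma dirichlet_ge0 (u : cell -> R) : 0 <= dirichlet u u.
Proof. by apply: sumr_ge0 => x _; rewrite -!expr2 !addr_ge0 ?sqr_ge0. Qed.

Lemma sum_mul_lap h (u v : cell -> R) :
  \sum_x v x * lap h u x = - (h ^- 2 * dirichlet v u).
Proof.
rewrite (eq_bigr (fun x => h ^- 2 * (v x * (u (shift1 x) + u (unshift1 x) - 2 * u x)
    + v x * (u (shift2 x) + u (unshift2 x) - 2 * u x)
    + v x * (u (shift3 x) + u (unshift3 x) - 2 * u x)))); last by move=> x _; rewrite /lap; ring.
rewrite -mulr_sumr !big_split /= (sum_mul_diff2 shift1K) (sum_mul_diff2 shift2K).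
by rewrite (sum_mul_diff2 shift3K) /dirichlet !big_split /=; ring.
Qed.

Lemma sum_mul_lapC h (u v : cell -> R) :
  \sum_x v x * lap h u x = \sum_x u x * lap h v x.
Proof. by rewrite !sum_mul_lap dirichletC. Qed.

Lemma sum_lap h (u : cell -> R) : \sum_x lap h u x = 0.
Proof.
rewrite -(eq_bigr _ (fun x _ => mul1r (lap h u x))) sum_mul_lap /dirichlet.
by rewrite big1 ?mulr0 ?oppr0 // => x _; rewrite !subrr !mul0r !addr0.
Qed.

Lemma sum_mul_lap_le0 h (u : cell -> R) : \sum_x u x * lap h u x <= 0.
Proof. by rewrite sum_mul_lap oppr_le0 mulr_ge0 ?dirichlet_ge0 ?invr_ge0 ?sqr_ge0. Qed.

Lemma ordS_invariant_const (f : 'I_N -> R) :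
  (forall i, f (ordS i) = f i) -> forall i, f i = f ord0.
Proof.
move=> fS i.
have iterS k : val (iter k (@ordS N) ord0) = (k %% N)%N.
  elim: k => [|k IH] /=; first by rewrite mod0n.
  by move: IH; rewrite /ordS /= => ->; rewrite -addn1 modnDml addn1.
have -> : i = iter i (@ordS N) ord0 by apply: val_inj; rewrite iterS modn_small.
by elim: (nat_of_ord i) => [|k IH] //=; rewrite fS.
Qed.

Lemma lap_eq0_const h (u : cell -> R) : h != 0 -> (forall x, lap h u x = 0) ->
  forall x, u x = u (ord0, ord0, ord0).
Proof.
move=> h0 lap0.
have : dirichlet u u = 0.
  apply/eqP; move: (sum_mul_lap h u u); rewrite big1 => [|x _]; last by rewrite lap0 mulr0.
  by move/eqP; rewrite eq_sym oppr_eq0 mulf_eq0 invr_eq0 expf_eq0 /= (negbTE h0).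
move/eqP; rewrite psumr_eq0 => [/allP flat|x _]; last first.
  by rewrite -!expr2 !addr_ge0 ?sqr_ge0.
have {}flat x : [/\ u (shift1 x) = u x, u (shift2 x) = u x & u (shift3 x) = u x].
  move: (flat x (mem_index_enum x)); rewrite -!expr2.
  rewrite !paddr_eq0 ?addr_ge0 ?sqr_ge0 // !sqrf_eq0 !subr_eq0.
  by case/andP => /andP [/eqP -> /eqP ->] /eqP ->.
case=> [[i j] k].
rewrite (ordS_invariant_const (f := fun a => u (a, j, k))); last first.
  by move=> a; case: (flat (a, j, k)).
rewrite (ordS_invariant_const (f := fun a => u (ord0, a, k))); last first.
  by move=> a; case: (flat (ord0, a, k)).
rewrite (ordS_invariant_const (f := fun a => u (ord0, ord0, a))) // => a.
by case: (flat (ord0, ord0, a)).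
Qed.

End PeriodicGrid.

Section Entropy.
Variable R : realType.
Implicit Types a b s x y z : R.

Definition xlnx z := z * ln z.
Definition entropy x := xlnx (1 + x) + xlnx (1 - x).
Definition dentropy x := ln (1 + x) - ln (1 - x).

Lemma ln_le_subr1 z : 0 < z -> ln z <= z - 1.
Proof. by move=> z0; have := @le_ln1Dx R (z - 1); rewrite addrCA subrr addr0; apply; lra. Qed.

Lemma xlnx_tangent a b : 0 <= a -> 0 < b -> xlnx b + (ln b + 1) * (a - b) <= xlnx a.
Proof.
rewrite /xlnx le_eqVlt => /orP[/eqP <- b0|a0 b0]; first by rewrite mul0r; lra.
have : a * (ln b - ln a) <= b - a.
  have <- : a * (b / a - 1) = b - a by field; rewrite gt_eqF.
  by rewrite -ln_div ?posrE // ler_pM2l // ln_le_subr1 ?divr_gt0.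
lra.
Qed.

Lemma entropy_tangent x y : -1 < y < 1 -> -1 <= x <= 1 ->
  entropy y + dentropy y * (x - y) <= entropy x.
Proof.
case/andP=> y1 y2 /andP[x1 x2].
have A := @xlnx_tangent (1 + x) (1 + y) ltac:(lra) ltac:(lra).
have B := @xlnx_tangent (1 - x) (1 - y) ltac:(lra) ltac:(lra).
rewrite /entropy /dentropy; lra.
Qed.

Lemma entropyN x : entropy (- x) = entropy x.
Proof. by rewrite /entropy opprK addrC. Qed.

Lemma dentropy_lt x y : -1 < x -> x < y -> y < 1 -> dentropy x < dentropy y.
Proof.
move=> x1 xy y1; rewrite /dentropy.
have : ln (1 + x) < ln (1 + y) by rewrite ltr_ln ?posrE; lra.
have : ln (1 - y) < ln (1 - x) by rewrite ltr_ln ?posrE; lra.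
lra.
Qed.

Lemma dentropy_secant_gt0 x y : -1 < x < 1 -> -1 < y < 1 -> x != y ->
  0 < (y - x) * (dentropy y - dentropy x).
Proof.
case/andP=> x1 x2 /andP[y1 y2]; case: (ltgtP x y) => // xy _.
- by rewrite mulr_gt0 ?subr_gt0 ?dentropy_lt.
- by rewrite nmulr_rgt0 ?subr_lt0 ?dentropy_lt.
Qed.

Lemma dentropy_le x y : -1 < x -> x <= y -> y < 1 -> dentropy x <= dentropy y.
Proof.
move=> x1; rewrite le_eqVlt => /orP[/eqP -> //|xy] y1.
exact/ltW/dentropy_lt.
Qed.

Lemma dentropy_ge_lnV s : 0 < s -> s <= 1 -> - ln s <= dentropy (1 - s).
Proof.
move=> s0 s1; rewrite /dentropy subKr.
have : 0 <= ln (1 + (1 - s)) by apply: ln_ge0; lra.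
lra.
Qed.

Lemma xlnx_le0 z : z <= 0 -> xlnx z = 0.
Proof. by move=> z0; rewrite /xlnx ln0 // mulr0. Qed.

Lemma normr_xlnx_le z : 0 < z -> z <= 1 -> `|xlnx z| <= 2 * Num.sqrt z.
Proof.
move=> z0 z1.
have sz0 : 0 < Num.sqrt z by rewrite sqrtr_gt0.
have zE : z = Num.sqrt z ^+ 2 by rewrite sqr_sqrtr // ltW.
have ln_ge : 2 * (1 - (Num.sqrt z)^-1) <= ln z.
  rewrite [in X in _ <= ln X]zE (@lnXn R 2 _ sz0) mulr2n.
  have := @ln_le_subr1 (Num.sqrt z)^-1 ltac:(by rewrite invr_gt0).
  by rewrite lnV ?posrE //; lra.
rewrite /xlnx ler0_norm; last by rewrite mulr_ge0_le0 ?ln_le0 // ltW.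
have : z * (2 * (1 - (Num.sqrt z)^-1)) <= z * ln z by rewrite ler_pM2l.
have -> : z * (2 * (1 - (Num.sqrt z)^-1)) = 2 * z - 2 * Num.sqrt z.
  have zV : z / Num.sqrt z = Num.sqrt z by rewrite {1}zE expr2 mulfK ?gt_eqF.
  by rewrite -[in RHS]zV; ring.
lra.
Qed.

Lemma xlnx_continuous : continuous xlnx.
Proof.
move=> x; have [x0|x0|->] := ltgtP x 0.
- apply/cvgrPdist_lt => e e0; near=> y.
  rewrite !xlnx_le0 ?subrr ?normr0 ?(ltW x0) //.
  by apply/ltW; near: y; exact: (cvgr_lt x cvg_id).
- exact: continuousM cvg_id (continuous_ln x0).
- apply/cvgrPdist_lt => e e0; near=> y.
  rewrite xlnx_le0 // sub0r normrN.
  have [y0|y0] := leP y 0; first by rewrite xlnx_le0 ?normr0.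
  have : `|y| < Num.min 1 ((e / 2) ^+ 2).
    by near: y; apply: (@nbhs0_lt R R); rewrite lt_min ltr01 exprn_gt0 ?divr_gt0.
  rewrite gtr0_norm // lt_min => /andP[/ltW y1 ye].
  apply: le_lt_trans (normr_xlnx_le y0 y1) _.
  have : Num.sqrt y < e / 2.
    by rewrite -(ltr_pXn2r (_ : (0 < 2)%N)) ?sqr_sqrtr ?ltW // ?nnegrE ?sqrtr_ge0 ?divr_ge0 ?ltW.
  lra.
Unshelve. all: by end_near.
Qed.

Lemma entropy_continuous : continuous entropy.
Proof.
move=> x; apply: cvgD.
- apply: (continuous_comp (f := fun z => 1 + z)); last exact: xlnx_continuous.
  by apply: cvgD; [exact: cvg_cst | exact: cvg_id].
- apply: (continuous_comp (f := fun z => 1 - z)); last exact: xlnx_continuous.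
  by apply: cvgB; [exact: cvg_cst | exact: cvg_id].
Qed.

Lemma dentropy_continuous x : -1 < x < 1 -> {for x, continuous dentropy}.
Proof.
case/andP=> x1 x2; apply: cvgB.
- apply: (continuous_comp (f := fun z => 1 + z)); last by apply: continuous_ln; rewrite /=; lra.
  by apply: cvgD; [exact: cvg_cst | exact: cvg_id].
- apply: (continuous_comp (f := fun z => 1 - z)); last by apply: continuous_ln; rewrite /=; lra.
  by apply: cvgB; [exact: cvg_cst | exact: cvg_id].
Qed.

Lemma near0_mul_ge0_eq0 (E : R -> R) : {for 0, continuous E} ->
  (\forall t \near 0, 0 <= t * E t) -> E 0 = 0.
Proof.
move=> cE tE.
have nonzero (P : R -> Prop) : (\forall t \near 0, P t) -> exists t, P t /\ 0 < t /\ P (- t).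
  case/nbhs_norm0P => e e0 Pe.
  have e2 : 0 < e / 2 by rewrite divr_gt0.
  have lt_e : `|e / 2| < e by rewrite gtr0_norm // ltr_pdivrMr // ltr_pMr ?ltr1n.
  by exists (e / 2); split; [|split]; [apply: Pe | | apply: Pe; rewrite /= normrN].
have [E0|E0|//] := ltgtP (E 0) 0.
- have : \forall t \near 0, E t < 0 /\ 0 <= t * E t.
    by near=> t; split; [near: t; exact: (cvgr_lt (E 0) cE) | near: t; exact: tE].
  case/nonzero => t [[Et tEt] [t0 _]]; move: tEt; rewrite pmulr_rge0 //; lra.
- have : \forall t \near 0, 0 < E t /\ 0 <= t * E t.
    by near=> t; split; [near: t; exact: (cvgr_gt (E 0) cE) | near: t; exact: tE].
  case/nonzero => t [_ [t0 [Et tEt]]]; move: tEt; rewrite mulNr oppr_ge0 pmulr_rle0 //; lra.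
Unshelve. all: by end_near.
Qed.

End Entropy.

Section PairProblem.
Variable R : realType.
Implicit Types k l s t x y : R.

Definition pair_energy x y l k t :=
  entropy (x + t) + entropy (y - t) + l * t + k * t ^+ 2.

Definition pair_min x y l k := forall t, -1 <= x + t <= 1 -> -1 <= y - t <= 1 ->
  pair_energy x y l k 0 <= pair_energy x y l k t.

(* Minimality compared with the tangent lines of the convex entropy at x + t and y - t. *)
Lemma pair_min_slope x y l k t : pair_min x y l k -> -1 <= x <= 1 -> -1 <= y <= 1 ->
  -1 < x + t < 1 -> -1 < y - t < 1 ->
  0 <= t * (dentropy (x + t) - dentropy (y - t) + l + k * t).
Proof.
move=> xymin xb yb xt yt.
have Tx := entropy_tangent xt xb; have Ty := entropy_tangent yt yb.
have := xymin t ltac:(lra) ltac:(lra); rewrite /pair_energy addr0 subr0; lra.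
Qed.

(* Moving mass s off the value 1 gains at least s (-ln s), which beats any O(s) cost. *)
Lemma pair_min_neq1 y l k : -1 <= y < 1 -> ~ pair_min 1 y l k.
Proof.
case/andP=> y1 y2 ymin.
pose K := dentropy ((1 + y) / 2) + `|l| + `|k|.
pose s := Num.min (Num.min ((1 - y) / 2) 1) (expR (- (K + 1))).
have s0 : 0 < s by rewrite !lt_min expR_gt0 ltr01 andbT divr_gt0 //; lra.
have s1 : s <= 1 by rewrite !ge_min lexx orbT.
have s2 : s <= (1 - y) / 2 by rewrite !ge_min lexx.
have sK : K + 1 <= dentropy (1 - s).
  apply: le_trans (dentropy_ge_lnV s0 s1); rewrite lerNr -[X in _ <= X]expRK.
  by rewrite ler_ln ?posrE ?expR_gt0 // !ge_min lexx !orbT.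
have ys : dentropy (y + s) <= dentropy ((1 + y) / 2) by apply: dentropy_le; lra.
have ks : k * s <= `|k|.
  by apply: le_trans (ler_norm _) _; rewrite normrM (gtr0_norm s0) ler_piMr.
have := ler_norm (- l); rewrite normrN => nl.
have := @pair_min_slope 1 y l k (- s) ymin ltac:(lra) ltac:(lra) ltac:(lra) ltac:(lra).
rewrite opprK mulNr oppr_ge0 pmulr_rle0 //; rewrite /K in sK; lra.
Qed.

Lemma pair_min_neqN1 y l k : -1 < y <= 1 -> ~ pair_min (-1) y l k.
Proof.
move=> yb ymin; apply: (@pair_min_neq1 (- y) (- l) k); first lra.
move=> t xt yt; have := ymin (- t) ltac:(lra) ltac:(lra); rewrite /pair_energy.
rewrite -(entropyN (-1 + 0)) -(entropyN (y - 0)) -(entropyN (-1 + - t)) -(entropyN (y - - t)).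
by rewrite !opprD !opprK !mulrN !mulNr sqrrN !expr0n /= !mulr0 !oppr0 !addr0.
Qed.

Lemma pair_min_stationary x y l k : -1 < x < 1 -> -1 < y < 1 -> pair_min x y l k ->
  dentropy x - dentropy y + l = 0.
Proof.
move=> xb yb xymin.
pose E t := dentropy (x + t) - dentropy (y - t) + l + k * t.
have -> : dentropy x - dentropy y + l = E 0 by rewrite /E addr0 subr0 mulr0 addr0.
apply: near0_mul_ge0_eq0.
  apply: cvgD; last by apply: cvgM; [exact: cvg_cst | exact: cvg_id].
  apply: cvgD; last exact: cvg_cst.
  apply: cvgB.
    apply: (continuous_comp (f := fun t => x + t)).
      by apply: cvgD; [exact: cvg_cst | exact: cvg_id].
    by rewrite /= addr0; exact: dentropy_continuous.
  apply: (continuous_comp (f := fun t => y - t)).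
    by apply: cvgB; [exact: cvg_cst | exact: cvg_id].
  by rewrite /= subr0; exact: dentropy_continuous.
pose d := Num.min (Num.min (1 - x) (1 + x)) (Num.min (1 - y) (1 + y)).
have d0 : 0 < d by rewrite /d !lt_min; lra.
have dle : [/\ d <= 1 - x, d <= 1 + x, d <= 1 - y & d <= 1 + y].
  by rewrite /d !ge_min !lexx !orbT.
near=> t.
have : `|t| < d by near: t; exact: (@nbhs0_lt R R).
have := ler_norm t; have := ler_norm (- t); rewrite normrN.
case: dle => *; apply: pair_min_slope => //; lra.
Unshelve. all: by end_near.
Qed.

End PairProblem.

Section LaplaceInverse.
Variables (R : realType) (n : nat).
Local Notation cell := (cell n).
Local Notation ncell := #|{: cell}|.

Definition field_of_row (v : 'rV[R]_ncell) : cell -> R := fun x => v ord0 (enum_rank x).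
Definition row_of_field (u : cell -> R) : 'rV[R]_ncell := \row_p u (enum_val p).

Lemma row_of_fieldK : cancel row_of_field field_of_row.
Proof. by move=> u; apply: funext => x; rewrite /field_of_row mxE enum_rankK. Qed.

Lemma sum_enum_rank (F : 'I_ncell -> R) : \sum_p F p = \sum_(x : cell) F (enum_rank x).
Proof. exact: (reindex enum_rank (onW_bij _ (enum_rank_bij _))). Qed.

Lemma ncell_gt0 : (0 < ncell)%N.
Proof. by rewrite !card_prod card_ord !muln_gt0. Qed.

Lemma lap_sum h (r : seq 'I_ncell) (c : 'I_ncell -> R) (w : 'I_ncell -> cell -> R) x :
  lap h (fun y => \sum_(p <- r) c p * w p y) x = \sum_(p <- r) c p * lap h (w p) x.
Proof.
elim: r => [|p r IH]; first by rewrite /lap !big_nil; ring.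
by rewrite /lap !big_cons in IH *; rewrite -IH; ring.
Qed.

Definition lapmx h : 'M[R]_ncell :=
  \matrix_(p, q) lap h (field_of_row (delta_mx 0 p)) (enum_val q).

Lemma mul_lapmx h (v : 'rV_ncell) : v *m lapmx h = row_of_field (lap h (field_of_row v)).
Proof.
apply/rowP => q; rewrite !mxE.
under eq_bigr do rewrite mxE.
rewrite -lap_sum; congr lap; apply: funext => x.
rewrite /field_of_row (bigD1 (enum_rank x)) //= mxE !eqxx mulr1 big1 ?addr0 //.
by move=> p px; rewrite mxE [_ == p]eq_sym (negbTE px) andbF mulr0.
Qed.

Definition ones : 'cV[R]_ncell := const_mx 1.

Lemma mul_ones (v : 'rV_ncell) : (v *m ones) ord0 ord0 = \sum_x field_of_row v x.
Proof.
by rewrite mxE sum_enum_rank; apply: eq_bigr => x _; rewrite mxE mulr1 [ord0]ord1.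
Qed.

Lemma rank_ones : \rank ones = 1%N.
Proof.
apply/eqP; rewrite eqn_leq rank_leq_col lt0n mxrank_eq0.
by apply/eqP => /matrixP /(_ (Ordinal ncell_gt0) ord0); rewrite !mxE => /eqP; rewrite oner_eq0.
Qed.

Lemma lapmx_sum0 h : (lapmx h <= kermx ones)%MS.
Proof.
rewrite sub_kermx; apply/eqP/matrixP => p j; rewrite mxE [RHS]mxE.
under eq_bigr do rewrite !mxE mulr1.
by rewrite sum_enum_rank (eq_bigr _ (fun x _ => congr1 _ (enum_rankK x))) sum_lap.
Qed.

Lemma kermx_lapmx h : h != 0 -> (kermx (lapmx h) <= ones^T)%MS.
Proof.
move=> h0; apply/row_subP => i.
have : row i (kermx (lapmx h)) *m lapmx h = 0 by rewrite -row_mul mulmx_ker row0.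
move: (row i _) => r rK.
have lap0 x : lap h (field_of_row r) x = 0.
  have := congr1 (fun m : 'rV[R]_ncell => m ord0 (enum_rank x)) (mul_lapmx h r).
  by rewrite rK !mxE enum_rankK.
have -> : r = field_of_row r (ord0, ord0, ord0) *: ones^T.
  apply/rowP => p; rewrite !mxE mulr1 -(lap_eq0_const h0 lap0 (enum_val p)).
  by rewrite /field_of_row enum_valK [ord0]ord1.
exact: scalemx_sub.
Qed.

Lemma lapmx_kermx_ones h : h != 0 -> (kermx ones <= lapmx h)%MS.
Proof.
move=> h0; rewrite -(mxrank_leqif_sup (lapmx_sum0 h)).2 eqn_leq mxrankS ?lapmx_sum0 //=.
have := mxrankS (kermx_lapmx h0); rewrite mxrank_tr !mxrank_ker !rank_ones.
by have := rank_leq_row (lapmx h); lia.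
Qed.

Definition lapinv h (f : cell -> R) : cell -> R :=
  field_of_row (row_of_field f *m pinvmx (lapmx h)).

Lemma lapinvE h (f : cell -> R) x :
  lapinv h f x = \sum_p f (enum_val p) * pinvmx (lapmx h) p (enum_rank x).
Proof. by rewrite /lapinv /field_of_row mxE; apply: eq_bigr => p _; rewrite mxE. Qed.

Lemma lapinv_lin h (f g : cell -> R) c x :
  lapinv h (fun y => f y + c * g y) x = lapinv h f x + c * lapinv h g x.
Proof. by rewrite !lapinvE mulr_sumr -big_split; apply: eq_bigr => p _ /=; ring. Qed.

Lemma lapinvK h (f : cell -> R) : h != 0 -> \sum_x f x = 0 -> lap h (lapinv h f) = f.
Proof.
move=> h0 f0.
have f_ker : (row_of_field f <= kermx ones)%MS.
  rewrite sub_kermx; apply/eqP/matrixP => i j.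
  by rewrite !ord1 mul_ones row_of_fieldK mxE.
rewrite -[RHS]row_of_fieldK -[in RHS](mulmxKpV (submx_trans f_ker (lapmx_kermx_ones h0))).
by rewrite mul_lapmx row_of_fieldK.
Qed.

End LaplaceInverse.

Section Energy.
Variables (R : realType) (n : nat) (h dt eps th : R) (phi0 : cell n -> R).
Hypothesis h0 : h != 0.
Local Notation cell := (cell n).

Lemma sum_mul_lapinvC (f d : cell -> R) : \sum_x f x = 0 -> \sum_x d x = 0 ->
  \sum_x f x * lapinv h d x = \sum_x d x * lapinv h f x.
Proof.
move=> f0 d0.
have -> : \sum_x f x * lapinv h d x = \sum_x lapinv h d x * lap h (lapinv h f) x.
  by rewrite (lapinvK h0 f0); apply: eq_bigr => x _; rewrite mulrC.
by rewrite sum_mul_lapC (lapinvK h0 d0); apply: eq_bigr => x _; rewrite mulrC.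
Qed.

(* -<f, lapinv f> = ||f||_{-1}^2 and -<u, lap u> = ||grad_h u||^2, without the factor h^3. *)
Definition quad_energy (u : cell -> R) : R :=
  - (dt^-1 / 2) * \sum_x (u x - phi0 x) * lapinv h (fun y => u y - phi0 y) x
  - th * \sum_x phi0 x * u x - eps ^+ 2 / 2 * \sum_x u x * lap h u x.

Definition energy (u : cell -> R) : R := \sum_x entropy (u x) + quad_energy u.

Definition dquad_energy (u : cell -> R) (x : cell) : R :=
  - dt^-1 * lapinv h (fun y => u y - phi0 y) x - th * phi0 x - eps ^+ 2 * lap h u x.

Definition curvature (d : cell -> R) : R :=
  - (dt^-1 / 2) * \sum_x d x * lapinv h d x - eps ^+ 2 / 2 * \sum_x d x * lap h d x.

Lemma quad_energy_expand (u d : cell -> R) t :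
  \sum_x u x = \sum_x phi0 x -> \sum_x d x = 0 ->
  quad_energy (fun x => u x + t * d x) =
  quad_energy u + t * \sum_x d x * dquad_energy u x + t ^+ 2 * curvature d.
Proof.
move=> umass d0.
have f0 : \sum_x (u x - phi0 x) = 0 by rewrite sumrB umass subrr.
have := sum_quadratic_expand (L := lapinv h) (fun x => lapinv_lin h _ _ _ x)
  (sum_mul_lapinvC f0 d0).
have := sum_quadratic_expand (L := lap h) (fun x => lap_lin h _ _ _ x) (sum_mul_lapC h d u).
have shiftE : (fun y => u y + t * d y - phi0 y) = (fun y => u y - phi0 y + t * d y).
  by apply: funext => y; ring.
rewrite /quad_energy /dquad_energy /curvature shiftE => -> dev_expand.
have -> : \sum_x (u x + t * d x - phi0 x) * lapinv h (fun y => u y - phi0 y + t * d y) x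
    = \sum_x (u x - phi0 x + t * d x) * lapinv h (fun y => u y - phi0 y + t * d y) x.
  by apply: eq_bigr => x _; congr (_ * _); ring.
rewrite dev_expand.
have -> : \sum_x phi0 x * (u x + t * d x) = \sum_x phi0 x * u x + t * \sum_x phi0 x * d x.
  by rewrite mulr_sumr -big_split; apply: eq_bigr => x _ /=; ring.
have -> : \sum_x d x * (- dt^-1 * lapinv h (fun y => u y - phi0 y) x - th * phi0 x
    - eps ^+ 2 * lap h u x) = - dt^-1 * \sum_x d x * lapinv h (fun y => u y - phi0 y) x
    - th * \sum_x phi0 x * d x - eps ^+ 2 * \sum_x d x * lap h u x.
  by rewrite !mulr_sumr -!sumrB; apply: eq_bigr => x _; ring.
by move: (dt^-1) => q; field.
Qed.

Lemma energy_transfer (u : cell -> R) a b t : a != b -> \sum_x u x = \sum_x phi0 x ->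
  let l := dquad_energy u a - dquad_energy u b in let k := curvature (transfer a b) in
  energy (fun x => u x + t * transfer a b x) =
  energy u + pair_energy (u a) (u b) l k t - pair_energy (u a) (u b) l k 0.
Proof.
move=> ab umass l k.
have tra : transfer a b a = 1 :> R by rewrite /transfer eqxx (negbTE ab) subr0.
have trb : transfer a b b = -1 :> R by rewrite /transfer eqxx eq_sym (negbTE ab) sub0r.
have tro x : x != a -> x != b -> transfer a b x = 0 :> R.
  by move=> /negbTE xa /negbTE xb; rewrite /transfer xa xb subrr.
have lE : \sum_x transfer a b x * dquad_energy u x = l.
  rewrite (sum_supp2 ab) ?tra ?trb => [|x xa xb]; last by rewrite tro ?mul0r.
  by rewrite mul1r mulN1r.
have : \sum_x (entropy (u x + t * transfer a b x) - entropy (u x)) =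
    (entropy (u a + t) - entropy (u a)) + (entropy (u b - t) - entropy (u b)).
  rewrite (sum_supp2 ab) ?tra ?trb => [|x xa xb]; last by rewrite tro ?mulr0 ?addr0 ?subrr.
  by rewrite mulr1 mulrN1.
rewrite sumrB /energy quad_energy_expand ?sum_transfer // lE /pair_energy.
by rewrite addr0 subr0 mulr0 expr0n /= mulr0 /k; lra.
Qed.

End Energy.

Lemma continuous_sum (R : realType) (T : topologicalType) (I : Type) (r : seq I)
    (F : I -> T -> R) :
  (forall i, continuous (F i)) -> continuous (fun v => \sum_(i <- r) F i v).
Proof.
move=> cF v; elim: r => [|i r IH].
  by under eq_fun do rewrite big_nil; exact: cvg_cst.
by under eq_fun do rewrite big_cons; exact: cvgD (cF i v) IH.
Qed.

Section Minimizer.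
Variables (R : realType) (n : nat) (h dt eps th : R) (phi0 : cell n -> R).
Local Notation cell := (cell n).
Local Notation ncell := #|{: cell}|.
Local Notation energy := (energy h dt eps th phi0).

Lemma energy_continuous (T : topologicalType) (u : T -> cell -> R) :
  (forall x, continuous (fun v => u v x)) -> continuous (fun v => energy (u v)).
Proof.
move=> cu.
have cdev x : continuous (fun v => u v x - phi0 x).
  by move=> v; apply: cvgB; [exact: cu | exact: cvg_cst].
have clapinv x : continuous (fun v => lapinv h (fun y => u v y - phi0 y) x).
  under eq_fun do rewrite lapinvE.
  by apply: continuous_sum => p v; apply: cvgM; [exact: cdev | exact: cvg_cst].
have clap x : continuous (fun v => lap h (u v) x).
  move=> v; rewrite /lap; apply: cvgM; first exact: cvg_cst.
  by repeat first [apply: cvgD | apply: cvgN | apply: cvgM | exact: cvg_cst | exact: cu].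
move=> v; apply: cvgD.
  apply: continuous_sum => x w.
  by apply: (continuous_comp (f := fun v => u v x)); [exact: cu | exact: entropy_continuous].
apply: cvgB; [apply: cvgB|]; apply: cvgM; try exact: cvg_cst; apply: continuous_sum => x {}v.
- by apply: cvgM; [exact: cdev | exact: clapinv].
- by apply: cvgM; [exact: cvg_cst | exact: cu].
- by apply: cvgM; [exact: cu | exact: clap].
Qed.

Definition feasible (w : cell -> R) :=
  (forall x, -1 <= w x <= 1) /\ \sum_x w x = \sum_x phi0 x.

Definition energy_minimizer (phi : cell -> R) :=
  feasible phi /\ forall w, feasible w -> energy phi <= energy w.

Local Open Scope classical_set_scope.

Lemma energy_minimizer_exists : `|\sum_x phi0 x| <= ncell%:R ->
  exists phi, energy_minimizer phi.
Proof.
move=> mass_le.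
pose box := [set v : 'rV[R]_ncell | forall p, `[-1, 1]%classic (v ord0 p)].
pose slice := [set v : 'rV[R]_ncell | \sum_p v ord0 p = \sum_x phi0 x].
have box_compact : compact box := rV_compact (fun=> @segment_compact R (-1) 1).
have slice_closed : closed slice.
  have : continuous (fun v : 'rV[R]_ncell => \sum_p v ord0 p).
    by apply: continuous_sum => p v; exact: coord_continuous.
  by move/continuous_closedP => /(_ _ (@closed_eq _ (\sum_x phi0 x))).
have ncell0 : 0 < ncell%:R :> R by rewrite ltr0n ncell_gt0.
have feasibleE v : (box `&` slice) v <-> feasible (field_of_row v).
  split; case=> vbox vsum; split.
  - by move=> x; have := vbox (enum_rank x); rewrite /= in_itv.
  - by rewrite -vsum /field_of_row [RHS]sum_enum_rank.
  - by move=> p /=; rewrite in_itv /=; have := vbox (enum_val p); rewrite /field_of_row enum_valK.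
  - by rewrite /slice /= sum_enum_rank -vsum.
have econt : {within box `&` slice, continuous (fun v => energy (field_of_row v))}.
  apply: continuous_subspaceT; apply: energy_continuous => x.
  exact: coord_continuous.
have [|v /set_mem /feasibleE vfeas vmin] :=
  compact_EVT_min _ (compact_closedI box_compact slice_closed) econt.
  have mean_le : `|(\sum_x phi0 x) / ncell%:R| <= 1.
    by rewrite normrM normfV normr_nat ler_pdivrMr // mul1r.
  exists (const_mx ((\sum_x phi0 x) / ncell%:R)); apply/feasibleE; split.
    by move=> x; rewrite /field_of_row mxE -ler_norml.
  rewrite /field_of_row; under eq_bigr do rewrite mxE.
  by rewrite sumr_const -[LHS]mulr_natr mulfVK ?gt_eqF.
exists (field_of_row v); split=> // w wfeas.
have : (box `&` slice) (row_of_field w) by apply/feasibleE; rewrite row_of_fieldK.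
by move/mem_set/vmin; rewrite row_of_fieldK.
Qed.

End Minimizer.

Section SchemeSolution.
Variables (R : realType) (n : nat) (h dt eps th : R) (phi0 : cell n -> R).
Hypothesis h0 : h != 0.
Local Notation cell := (cell n).
Local Notation ncell := #|{: cell}|.
Local Notation dquad_energy := (dquad_energy h dt eps th phi0).
Local Notation energy_minimizer := (energy_minimizer h dt eps th phi0).

Definition scheme_cell (phi mu : cell -> R) : Prop :=
  (forall x, (phi x - phi0 x) / dt = lap h mu x) /\
  (forall x, mu x = dentropy (phi x) - th * phi0 x - eps ^+ 2 * lap h phi x).

Lemma minimizer_pair_min phi a b : energy_minimizer phi -> a != b ->
  pair_min (phi a) (phi b) (dquad_energy phi a - dquad_energy phi b)
    (curvature h dt eps (transfer a b)).
Proof.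
move=> [[phi_box phi_mass] phi_min] ab t ta tb.
have feas : feasible phi0 (fun x => phi x + t * transfer a b x).
  split; last by rewrite big_split /= -mulr_sumr sum_transfer mulr0 addr0.
  move=> x; have [->|xa] := eqVneq x a.
    by rewrite /transfer eqxx (negbTE ab) subr0 mulr1.
  have [->|xb] := eqVneq x b; first by rewrite /transfer eqxx eq_sym (negbTE ab) sub0r mulrN1.
  by rewrite /transfer (negbTE xa) (negbTE xb) subrr mulr0 addr0.
by have := phi_min _ feas; rewrite energy_transfer //; lra.
Qed.

Lemma minimizer_interior phi : `|\sum_x phi0 x| < ncell%:R -> energy_minimizer phi ->
  forall x, -1 < phi x < 1.
Proof.
move=> mass_lt phi_min; have [[phi_box phi_mass] _] := phi_min.
have nonconst (c : R) : `|c| = 1 -> exists b, phi b != c.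
  move=> c1; have [/existsP //|/existsPn phi_c] := boolP [exists b, phi b != c].
  move: mass_lt; rewrite -phi_mass (eq_bigr _ (fun b _ => eqP (negbNE (phi_c b)))).
  by rewrite sumr_const normrMn c1 ltxx.
move=> x; have /andP[x1 x2] := phi_box x.
rewrite !lt_neqAle x1 x2 !andbT; apply/andP; split; apply/eqP => phix.
- have [b phib] := nonconst (-1) (normrN1 _).
  have xb : x != b by apply: contraNneq phib => <-; rewrite phix.
  have /andP[b1 b2] := phi_box b.
  apply: (@pair_min_neqN1 _ (phi b)); last by rewrite phix; exact: minimizer_pair_min.
  by rewrite b2 andbT lt_neqAle eq_sym phib.
- have [b phib] := nonconst 1 (normr1 _).
  have xb : x != b by apply: contraNneq phib => <-; rewrite phix.
  have /andP[b1 b2] := phi_box b.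
  apply: (@pair_min_neq1 _ (phi b)); last by rewrite -phix; exact: minimizer_pair_min.
  by rewrite b1 lt_neqAle phib.
Qed.

Lemma minimizer_stationary phi : (forall x, -1 < phi x < 1) -> energy_minimizer phi ->
  forall a b, dentropy (phi a) + dquad_energy phi a = dentropy (phi b) + dquad_energy phi b.
Proof.
move=> inner phi_min a b; have [-> //|ab] := eqVneq a b.
have := pair_min_stationary (inner a) (inner b) (minimizer_pair_min phi_min ab); lra.
Qed.

Lemma scheme_cell_exists : `|\sum_x phi0 x| < ncell%:R ->
  exists phi mu, [/\ forall x, -1 < phi x < 1, \sum_x phi x = \sum_x phi0 x
    & scheme_cell phi mu].
Proof.
move=> mass_lt; have [phi phi_min] := energy_minimizer_exists h dt eps th (ltW mass_lt).
have inner := minimizer_interior mass_lt phi_min.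
have phi_mass : \sum_x phi x = \sum_x phi0 x by case: phi_min => -[].
have dev0 : \sum_x (phi x - phi0 x) = 0 by rewrite sumrB phi_mass subrr.
pose c := dentropy (phi (ord0, ord0, ord0)) + dquad_energy phi (ord0, ord0, ord0).
pose mu x := dentropy (phi x) - th * phi0 x - eps ^+ 2 * lap h phi x.
have muE : mu = fun x => c + dt^-1 * lapinv h (fun y => phi y - phi0 y) x.
  apply: funext => x; rewrite /c -(minimizer_stationary inner phi_min x) /mu /dquad_energy.
  ring.
exists phi, mu; split=> //; split=> // x.
by rewrite muE lap_lin lap_cst (lapinvK h0 dev0) add0r mulrC.
Qed.

Lemma scheme_cell_unique phi1 mu1 phi2 mu2 : 0 < dt ->
  (forall x, -1 < phi1 x < 1) -> (forall x, -1 < phi2 x < 1) ->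
  scheme_cell phi1 mu1 -> scheme_cell phi2 mu2 -> phi1 = phi2.
Proof.
move=> dt0 inner1 inner2 [step1 mu1E] [step2 mu2E].
pose e x := phi2 x - phi1 x; pose m x := mu2 x - mu1 x.
pose T x := e x * (dentropy (phi2 x) - dentropy (phi1 x)).
have T_ge0 x : 0 <= T x.
  have [eq|ne] := eqVneq (phi1 x) (phi2 x); first by rewrite /T /e eq !subrr mul0r.
  exact/ltW/dentropy_secant_gt0.
have TE x : T x = e x * m x + eps ^+ 2 * (e x * lap h e x).
  by rewrite /T /m /e lapB mu1E mu2E; ring.
have sum_em : \sum_x e x * m x <= 0.
  have eE x : e x = dt * lap h m x.
    by rewrite /m lapB -step1 -step2 /e; field; rewrite gt_eqF.
  under eq_bigr do rewrite eE mulrAC -mulrA.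
  by rewrite -mulr_sumr pmulr_rle0 // sum_mul_lap_le0.
have sum_T0 : \sum_x T x = 0.
  apply/eqP; rewrite eq_le sumr_ge0 // andbT (eq_bigr _ (fun x _ => TE x)) big_split /=.
  have := mulr_ge0_le0 (sqr_ge0 eps) (sum_mul_lap_le0 h e).
  by rewrite -mulr_sumr; lra.
apply: funext => x; apply/eqP; apply: contraT => ne.
have : 0 < T x := dentropy_secant_gt0 (inner1 x) (inner2 x) ne.
move: sum_T0 => /eqP; rewrite psumr_eq0 // => /allP /(_ x (mem_index_enum x)) /eqP ->.
by rewrite ltxx.
Qed.

End SchemeSolution.

Section GridFunctions.
Variables (R : realType) (n : nat).
Local Notation N := n.+1.
Local Notation ncell := #|{: cell n}|.

Definition uncurry3 (g : grid R N) : cell n -> R := fun x => g x.1.1 x.1.2 x.2.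
Definition curry3 (u : cell n -> R) : grid R N := fun i j k => u (i, j, k).

Lemma curry3K (u : cell n -> R) : uncurry3 (curry3 u) = u.
Proof. by apply: funext => -[[i j] k]. Qed.

Lemma lap_hE h (g : grid R N) i j k : lap_h h g i j k = lap h (uncurry3 g) (i, j, k).
Proof. by rewrite /lap_h /lap /uncurry3 /=; congr (_ * _); ring. Qed.

Lemma uncurry3K : cancel uncurry3 curry3.
Proof. by move=> g; apply: funext => i; apply: funext => j; apply: funext. Qed.

Lemma gmeanE (L : R) (g : grid R N) : 0 < L -> gmean L g = (\sum_x uncurry3 g x) / ncell%:R.
Proof.
move=> L0; rewrite /gmean /ip.
under eq_bigr do under eq_bigr do under eq_bigr do rewrite mulr1.
rewrite pair_bigA pair_bigA !card_prod card_ord !natrM.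
have : N%:R != 0 :> R by rewrite pnatr_eq0.
by move: (N%:R : R) => K K0; field; rewrite K0 gt_eqF.
Qed.

Lemma norm_inf_lt1 (g : grid R N) : norm_inf g < 1 <-> forall x, `|uncurry3 g x| < 1.
Proof.
split=> [lt1 [[i j] k]|lt1].
  apply: le_lt_trans lt1; apply: le_trans (le_bigmax _ _ i).
  by apply: le_trans (le_bigmax _ _ j); exact: (le_bigmax _ (fun k => `|g i j k|) k).
by do 3 apply: bigmax_lt ltr01 _ => ? _; exact: (lt1 (_, _, _)).
Qed.

Lemma scheme_uncurry3 (L eps th dt : R) (g0 g1 mu : grid R N) :
  scheme L eps th dt g0 g1 mu <->
  scheme_cell (L / N%:R) dt eps th (uncurry3 g0) (uncurry3 g1) (uncurry3 mu).
Proof.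
split=> -[step muE]; split.
- by case=> [[i j] k]; rewrite /uncurry3 /= step lap_hE.
- by case=> [[i j] k]; rewrite /uncurry3 /= muE lap_hE.
- by move=> i j k; rewrite lap_hE; exact: (step (i, j, k)).
- by move=> i j k; rewrite lap_hE; exact: (muE (i, j, k)).
Qed.

Lemma gmean_sub_gmean_eq0 (L : R) (g0 g1 : grid R N) : 0 < L ->
  gmean L (fun i j k => g1 i j k - gmean L g0) = 0 <->
  \sum_x uncurry3 g1 x = \sum_x uncurry3 g0 x.
Proof.
move=> L0; have ncell0 : ncell%:R != 0 :> R by rewrite pnatr_eq0 -lt0n ncell_gt0.
rewrite !gmeanE // /uncurry3 /= sumrB sumr_const -[_ *+ _]mulr_natr mulfVK //.
split=> [/eqP|->]; last by rewrite subrr mul0r.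
by rewrite mulf_eq0 invr_eq0 (negbTE ncell0) orbF subr_eq0 => /eqP.
Qed.

Lemma admissibleE (L eps th dt : R) (g0 g1 : grid R N) : 0 < L ->
  admissible L eps th dt g0 g1 <->
  [/\ exists mu, scheme_cell (L / N%:R) dt eps th (uncurry3 g0) (uncurry3 g1) mu,
      \sum_x uncurry3 g1 x = \sum_x uncurry3 g0 x
    & forall x, -1 < uncurry3 g1 x < 1].
Proof.
move=> L0; split.
  case=> -[mu /scheme_uncurry3 sol] [/gmean_sub_gmean_eq0 mass /norm_inf_lt1 lt1].
  by split; [exists (uncurry3 mu) | exact: mass | move=> x; rewrite -ltr_norml].
case=> -[mu sol] mass inner; split.
  by exists (curry3 mu); apply/scheme_uncurry3; rewrite curry3K.
by split; [exact/gmean_sub_gmean_eq0 | apply/norm_inf_lt1 => x; rewrite ltr_norml].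
Qed.

End GridFunctions.

Theorem theorem2p3 (R : realType) (L eps theta0 dt M : R) (N : nat)
    (hL : 0 < L) (heps : 0 < eps) (htheta : 0 < theta0) (hdt : 0 < dt)
    (hN : (0 < N)%N) (hM : 0 < M) (phi0 : grid R N)
    (hbound : norm_inf phi0 <= M) (hmean : `|gmean L phi0| < 1) :
  exists phi1 : grid R N,
    admissible L eps theta0 dt phi0 phi1 /\
    forall psi : grid R N, admissible L eps theta0 dt phi0 psi -> psi = phi1.
Proof.
case: N hN phi0 hbound hmean => [//|n] _ phi0 _ hmean.
have h0 : L / n.+1%:R != 0 by rewrite mulf_neq0 ?invr_eq0 ?pnatr_eq0 ?gt_eqF.
have mass_lt : `|\sum_x uncurry3 phi0 x| < #|{: cell n}|%:R.
  by move: hmean; rewrite gmeanE // normrM normfV normr_nat ltr_pdivrMr ?ltr0n ?ncell_gt0 ?mul1r.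
have [phi [mu [inner mass sol]]] := scheme_cell_exists dt eps theta0 h0 mass_lt.
have admE psi := admissibleE eps theta0 dt phi0 psi hL.
exists (curry3 phi); split=> [|psi]; first by apply/admE; rewrite curry3K; split=> //; exists mu.
case/admE => -[mu' sol'] _ inner'.
by rewrite -(uncurry3K psi) (scheme_cell_unique hdt inner' inner sol' sol).
Qed.
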